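(* Assume Assumption A and let $\alpha>0$. For each $\delta\ge0$, the set $D_\delta$ is positively invariant under the semiflow generated by system (S), i.e. if $(\varphi,\tau_0)\in D_\delta$ then $((A_{1,t},\dots,A_{n,t}),(\tau_1(t),\dots,\tau_n(t)))\in D_\delta$ for all $t\ge0$, where $A_{i,t}(\theta):=A_i(t+\theta)$, $\theta\le0$. Moreover, for each $\delta>0$ there exists $M(\delta)>0$, independent of the initial conditions, such that for every $(\varphi,\tau_0)\in D_\delta$ with $\varphi_i\ge0$ and $\tau_{i0}>0$ for all $i$, the corresponding solution satisfies $$\limsup_{t\to+\infty}\max_{i=1,\dots,n}A_i(t)\le M(\delta).$$
   Context: For $\alpha>0$, $X_\alpha:=\{\phi\in C((-\infty,0]): e^{-\alpha|\cdot|}\phi(\cdot)\in BUC((-\infty,0])\cap \mathrm{Lip}((-\infty,0])\}$. The $n$-species system (S): for $i=1,\dots,n$, $$A_i'(t)=-\mu_{A_i}A_i(t)+\beta_i e^{-\mu_{J_i}\tau_i(t)}\frac{f_i(Z_i(t))}{f_i(Z_i(t-\tau_i(t)))}A_i(t-\tau_i(t)),\quad t\ge0,$$ $$\int_{t-\tau_i(t)}^{t}f_i(Z_i(\sigma))\,d\sigma=\int_{-\tau_{i0}}^{0}f_i(Z_{i\varphi}(\sigma))\,d\sigma,\quad t\ge0,$$ with $A_i(t)=\varphi_i(t)$ for $t\le0$, $\tau_i(0)=\tau_{i0}\ge0$, where $Z_i(t)=\sum_{j=1}^n\zeta_{ij}A_j(t)$, $Z_{i\varphi}(t)=\sum_{j=1}^n\zeta_{ij}\varphi_j(t)$,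 $\zeta_{ij}\ge0$. A solution consists of continuous $A_i:\mathbb{R}\to[0,\infty)$, differentiable on $[0,\infty)$, and $\tau_i:[0,\infty)\to[0,\infty)$ satisfying these equations for all $t\ge0$. Assumption A: for each $i$, (i) $\mu_{A_i}>0$, $\mu_{J_i}>0$, $\beta_i>0$, $\zeta_{ii}>0$; (ii) $f_i:\mathbb{R}\to(0,\infty)$ is Lipschitz continuous and continuously differentiable with $f_i>0$, $f_i'\le0$ on $\mathbb{R}$, $\lim_{x\to+\infty}f_i(x)=0$, and $\sup_{x\ge0}\frac{f_i(x)}{f_i(cx)}<+\infty$ for every $c\ge1$. For $\delta\ge0$, $D_\delta:=\{(\varphi,\tau_0)\in X_\alpha^n\times[0,+\infty)^n: \int_{-\tau_{i0}}^0 f_i(Z_{i\varphi}(\sigma))\,d\sigma\ge\delta\ \ \forall i=1,\dots,n\}$, with $\varphi=(\varphi_1,\dots,\varphi_n)$, $\tau_0=(\tau_{10},\dots,\tau_{n0})$. *)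

From Stdlib Require Import Reals Lra.
Open Scope R_scope.

Fixpoint sumR (n : nat) (g : nat -> R) : R :=
  match n with O => 0 | S k => sumR k g + g k end.

Definition cont_on_nonpos (g : R -> R) : Prop :=
  forall x, x <= 0 -> forall eps, 0 < eps -> exists d, 0 < d /\
    forall y, y <= 0 -> Rabs (y - x) < d -> Rabs (g y - g x) < eps.

Definition bounded_on_nonpos (g : R -> R) : Prop :=
  exists K, forall x, x <= 0 -> Rabs (g x) <= K.

Definition unif_cont_on_nonpos (g : R -> R) : Prop :=
  forall eps, 0 < eps -> exists d, 0 < d /\
    forall x y, x <= 0 -> y <= 0 -> Rabs (y - x) < d -> Rabs (g y - g x) < eps.

Definition lipschitz_on_nonpos (g : R -> R) : Prop :=
  exists L, forall x y, x <= 0 -> y <= 0 -> Rabs (g y - g x) <= L * Rabs (y - x).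

Definition in_X (alpha : R) (phi : R -> R) : Prop :=
  let psi := fun x => exp (- alpha * Rabs x) * phi x in
  cont_on_nonpos phi /\ bounded_on_nonpos psi /\ unif_cont_on_nonpos psi
  /\ lipschitz_on_nonpos psi.

Definition f_hyp (fi : R -> R) : Prop :=
  (exists L, forall x y, Rabs (fi x - fi y) <= L * Rabs (x - y)) /\
  (exists fi' : R -> R, (forall x, derivable_pt_lim fi x (fi' x)) /\
      continuity fi' /\ (forall x, fi' x <= 0)) /\
  (forall x, 0 < fi x) /\
  (forall eps, 0 < eps -> exists X, forall x, X <= x -> Rabs (fi x) < eps) /\
  (forall c, 1 <= c -> exists K, forall x, 0 <= x -> fi x / fi (c * x) <= K).

Definition assumptionA (n : nat) (muA muJ beta : nat -> R) (zeta : nat -> nat -> R)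
  (f : nat -> R -> R) : Prop :=
  forall i, (i < n)%nat ->
    0 < muA i /\ 0 < muJ i /\ 0 < beta i /\ 0 < zeta i i /\
    (forall j, (j < n)%nat -> 0 <= zeta i j) /\ f_hyp (f i).

Definition Zof (n : nat) (zeta : nat -> nat -> R) (u : nat -> R -> R) (i : nat) (s : R) : R :=
  sumR n (fun j => zeta i j * u j s).

Definition in_D (n : nat) (alpha : R) (zeta : nat -> nat -> R) (f : nat -> R -> R)
  (delta : R) (phi : nat -> R -> R) (tau0 : nat -> R) : Prop :=
  forall i, (i < n)%nat ->
    in_X alpha (phi i) /\ 0 <= tau0 i /\
    exists pr : Riemann_integrable (fun s => f i (Zof n zeta phi i s)) (- tau0 i) 0,
      delta <= RiemannInt pr.

(* derivative of g at t >= 0 relative to the domain [0,+oo) (one-sided at t = 0) *)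
Definition deriv_nonneg (g : R -> R) (t l : R) : Prop :=
  forall eps, 0 < eps -> exists d, 0 < d /\
    forall h, h <> 0 -> 0 <= t + h -> Rabs h < d ->
      Rabs ((g (t + h) - g t) / h - l) < eps.

Definition is_solution (n : nat) (muA muJ beta : nat -> R) (zeta : nat -> nat -> R)
  (f : nat -> R -> R) (phi : nat -> R -> R) (tau0 : nat -> R)
  (A : nat -> R -> R) (tau : nat -> R -> R) : Prop :=
  forall i, (i < n)%nat ->
    continuity (A i) /\
    (forall t, 0 <= A i t) /\
    (forall t, t <= 0 -> A i t = phi i t) /\
    tau i 0 = tau0 i /\
    (forall t, 0 <= t -> 0 <= tau i t) /\
    (forall t, 0 <= t ->
       deriv_nonneg (A i) t
         (- muA i * A i t
          + beta i * exp (- muJ i * tau i t)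
            * (f i (Zof n zeta A i t) / f i (Zof n zeta A i (t - tau i t)))
            * A i (t - tau i t))) /\
    (forall t, 0 <= t ->
       exists pr1 : Riemann_integrable (fun s => f i (Zof n zeta A i s)) (t - tau i t) t,
       exists pr2 : Riemann_integrable (fun s => f i (Zof n zeta phi i s)) (- tau0 i) 0,
         RiemannInt pr1 = RiemannInt pr2).

From Stdlib Require Import Reals Lra Lia.
From Coquelicot Require Import Coquelicot.
Open Scope R_scope.

(* The maturation condition [RInt F (t - tau t) t = const] determines the birth time
   [t - tau t] as an increasing function of [t] with derivative [F t / F (t - tau t)].
   Positive invariance of [D_delta] is then the change of variables [theta |-> t + theta] in
   the maturation integral, together with Lipschitz estimates keeping the shifted history
   in [X_alpha].

   For the ultimate bound fix a species, choose [T] ([horizon]) with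
   [beta e^(-muJ T / 2) / gamma <= 1/2], where [gamma = min mu (muJ / 2)] ([rate]), and [X]
   with [f < delta / T] on [[X, +oo)].  Individuals
   maturing at [t] after a delay [tau t < T] were born when [zeta A <= e^(mu T) X]: otherwise
   [f (Z)] would stay below [delta / T] and the maturation integral could not reach [delta].
   Those with [tau t >= T] survived with probability at most [e^(-muJ T)].  Comparing [A]
   with the solution of a linear equation driven by these bounds gives
   [A t <= b + (sup of A over the past) / 2 + o(1)] with [b] independent of the data, and
   iterating yields [limsup A <= 2 b]. *)

(** * Real-analysis preliminaries *)

Lemma continuous_eps_delta (g : R -> R) (x : R) : continuous g x ->
  forall eps, 0 < eps -> exists d, 0 < d /\
    forall y, Rabs (y - x) < d -> Rabs (g y - g x) < eps.
Proof.
  intros Hg eps Heps.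
  apply continuity_pt_filterlim in Hg. rewrite continuity_pt_locally in Hg.
  destruct (Hg (mkposreal eps Heps)) as [d Hd].
  exists d. split; [apply cond_pos | intros y; apply Hd].
Qed.

Lemma exp_le x y : x <= y -> exp x <= exp y.
Proof. intros [Hlt | ->]; [left; apply exp_increasing | right]; auto. Qed.

Lemma exp_le_1 x : x <= 0 -> exp x <= 1.
Proof. intros Hx. rewrite <- exp_0. now apply exp_le. Qed.

Lemma is_derive_exp_scal (c x : R) : is_derive (fun s => exp (c * s)) x (c * exp (c * x)).
Proof. auto_derive; auto. ring. Qed.

Lemma continuous_exp_scal (c x : R) : continuous (fun s => exp (c * s)) x.
Proof.
  apply (@ex_derive_continuous R_AbsRing R_NormedModule).
  eexists; apply is_derive_exp_scal.
Qed.

Lemma exp_scal_eventually_le C c eta : 0 <= C -> 0 < c -> 0 < eta ->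
  exists T, forall t, T <= t -> C * exp (- c * t) <= eta.
Proof.
  intros HC Hc Heta. exists (ln (C / eta + 1) / c). intros t Ht.
  assert (HCeta : 0 <= C / eta) by (apply Rle_mult_inv_pos; lra).
  assert (Hexp : C / eta + 1 <= exp (c * t)).
  { rewrite <- (exp_ln (C / eta + 1)) by lra. apply exp_le.
    apply Rmult_le_reg_r with (/ c); [apply Rinv_0_lt_compat; lra |].
    replace (c * t * / c) with t by (field; lra). exact Ht. }
  assert (Hinv : exp (- c * t) * exp (c * t) = 1)
    by (rewrite <- exp_plus, <- exp_0; f_equal; ring).
  assert (C <= eta * exp (c * t)).
  { apply Rle_trans with (eta * (C / eta + 1)); [field_simplify; lra |].
    apply Rmult_le_compat_l; lra. }
  pose proof (exp_pos (c * t)).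
  apply Rmult_le_reg_r with (exp (c * t)); auto.
  rewrite Rmult_assoc, Hinv. lra.
Qed.

Lemma half_pow_eventually_le K eps : 0 <= K -> 0 < eps -> exists N, K * (/ 2) ^ N <= eps.
Proof.
  intros HK Heps.
  destruct (pow_lt_1_zero (/ 2) ltac:(rewrite Rabs_pos_eq; lra) (eps / (K + 1)))
    as [N HN]; [apply Rdiv_lt_0_compat; lra |].
  exists N. pose proof (HN N (Nat.le_refl N)) as HNN.
  rewrite Rabs_pos_eq in HNN by (apply pow_le; lra).
  pose proof (pow_le (/ 2) N ltac:(lra)).
  apply Rle_trans with ((K + 1) * (/ 2) ^ N); [nra |].
  apply Rmult_le_reg_l with (/ (K + 1)); [apply Rinv_0_lt_compat; lra |].
  rewrite <- Rmult_assoc, Rinv_l by lra. unfold Rdiv in HNN. lra.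
Qed.

Lemma Rdiv_eps_delta (a0 b0 eps : R) : 0 < b0 -> 0 < eps ->
  exists d, 0 < d /\ forall a b, Rabs (a - a0) < d -> Rabs (b - b0) < d ->
    Rabs (a / b - a0 / b0) < eps.
Proof.
  intros Hb0 Heps. pose proof (Rabs_pos a0).
  set (c := b0 * b0 / (2 * (b0 + Rabs a0))).
  assert (Hc : 0 < c) by (apply Rdiv_lt_0_compat; nra).
  assert (Hc_eq : c * (b0 + Rabs a0) = b0 * b0 / 2) by (unfold c; field; lra).
  exists (Rmin (b0 / 2) (eps * c)). split; [apply Rmin_glb_lt; nra |].
  intros a b Ha Hb.
  pose proof (Rmin_l (b0 / 2) (eps * c)) as Hd1. pose proof (Rmin_r (b0 / 2) (eps * c)) as Hd2.
  set (d := Rmin (b0 / 2) (eps * c)) in *.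
  assert (Hb_pos : b0 / 2 < b) by (apply Rabs_def2 in Hb; lra).
  assert (Hsplit : a / b - a0 / b0 = ((a - a0) * b0 + a0 * (b0 - b)) / (b * b0))
    by (field; lra).
  assert (Hnum : Rabs ((a - a0) * b0 + a0 * (b0 - b)) <= eps * c * (b0 + Rabs a0)).
  { eapply Rle_trans; [apply Rabs_triang |]. rewrite !Rabs_mult, (Rabs_pos_eq b0) by lra.
    rewrite Rabs_minus_sym in Hb. pose proof (Rabs_pos (b0 - b)). nra. }
  assert (Hden : eps * (b0 * b0 / 2) < eps * (b * b0)).
  { apply Rmult_lt_compat_l; [lra |]. nra. }
  rewrite Hsplit, Rabs_div, (Rabs_pos_eq (b * b0)) by nra.
  apply Rmult_lt_reg_r with (b * b0); [nra |].
  unfold Rdiv. rewrite Rmult_assoc, Rinv_l, Rmult_1_r by nra.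
  rewrite Rmult_assoc, Hc_eq in Hnum. lra.
Qed.

Lemma le_of_derive_nonpos (D d : R -> R) a b : a <= b ->
  (forall x, a < x < b -> is_derive D x (d x)) -> (forall x, a < x < b -> d x <= 0) ->
  (forall x, a <= x <= b -> continuous D x) -> D b <= D a.
Proof.
  intros Hab Hd Hneg Hc.
  (* the MVT point may be an endpoint, where [d] is not controlled: clip [d] at 0 *)
  destruct (MVT_gen D a b (fun x => Rmin (d x) 0)) as [c [_ Hc_eq]].
  - intros x Hx. unfold Rmin, Rmax in Hx. destruct (Rle_dec a b); [| lra].
    rewrite Rmin_left by (apply Hneg; lra). apply Hd; lra.
  - intros x Hx. apply continuity_pt_filterlim, Hc.
    unfold Rmin, Rmax in Hx. destruct (Rle_dec a b); lra.
  - assert (Rmin (d c) 0 <= 0) by apply Rmin_r. nra.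
Qed.

Lemma Rabs_sub_le_of_derive_bounded (g dg : R -> R) K a b : 0 <= K ->
  (forall x, a < x < b -> is_derive g x (dg x)) -> (forall x, a < x < b -> Rabs (dg x) <= K) ->
  (forall x, a <= x <= b -> continuous g x) ->
  forall x y, a <= x <= b -> a <= y <= b -> Rabs (g y - g x) <= K * Rabs (y - x).
Proof.
  intros HK Hd Hb Hc x y Hx Hy.
  destruct (MVT_gen g x y (fun s => Rmax (- K) (Rmin K (dg s)))) as [c [_ Hc_eq]].
  - intros s Hs. assert (Hs' : a < s < b) by (unfold Rmin, Rmax in Hs; destruct (Rle_dec x y); lra).
    pose proof (Hb s Hs') as Hbs. apply Rabs_le_between in Hbs.
    rewrite Rmin_right, Rmax_right by lra. apply Hd; auto.
  - intros s Hs. apply continuity_pt_filterlim, Hc.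
    unfold Rmin, Rmax in Hs. destruct (Rle_dec x y); lra.
  - rewrite Hc_eq, Rabs_mult. apply Rmult_le_compat_r; [apply Rabs_pos |].
    unfold Rmax, Rmin. repeat destruct Rle_dec; unfold Rabs; repeat destruct Rcase_abs; lra.
Qed.

Lemma ex_RInt_cont (F : R -> R) : (forall x, continuous F x) -> forall a b, ex_RInt F a b.
Proof. intros HF a b. apply (@ex_RInt_continuous R_CompleteNormedModule). auto. Qed.

Section Primitive.

Variable F : R -> R.
Hypothesis F_cont : forall x, continuous F x.

Lemma RInt_sub0 a b : RInt F a b = RInt F 0 b - RInt F 0 a.
Proof.
  rewrite <- (RInt_Chasles F 0 a b) by apply ex_RInt_cont, F_cont.
  change (plus (RInt F 0 a) (RInt F a b)) with (RInt F 0 a + RInt F a b). lra.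
Qed.

Lemma is_derive_RInt0 x : is_derive (RInt F 0) x (F x).
Proof.
  apply is_derive_RInt with (a := 0); [| apply F_cont].
  apply filter_forall. intros y. apply RInt_correct, ex_RInt_cont, F_cont.
Qed.

Lemma continuous_RInt0 x : continuous (RInt F 0) x.
Proof.
  apply (@ex_derive_continuous R_AbsRing R_NormedModule).
  eexists. apply is_derive_RInt0.
Qed.

Lemma MVT_RInt0 a b : exists c, Rabs (c - a) <= Rabs (b - a) /\
  RInt F 0 b - RInt F 0 a = F c * (b - a).
Proof.
  destruct (MVT_gen (RInt F 0) a b F) as [c [Hc Heq]].
  - intros. apply is_derive_RInt0.
  - intros. apply continuity_pt_filterlim, continuous_RInt0.
  - exists c. split; auto. unfold Rmin, Rmax in Hc. destruct (Rle_dec a b);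
    unfold Rabs; repeat destruct Rcase_abs; lra.
Qed.

Hypothesis F_pos : forall x, 0 < F x.

Lemma RInt0_lt a b : a < b -> RInt F 0 a < RInt F 0 b.
Proof.
  intros Hab. pose proof (RInt_gt_0 F a b Hab (fun x _ => F_pos x)
    (fun x _ => F_cont x)) as Hpos.
  rewrite RInt_sub0 in Hpos. lra.
Qed.

Lemma RInt0_le a b : a <= b -> RInt F 0 a <= RInt F 0 b.
Proof. intros [Hab | ->]; [left; now apply RInt0_lt | right; reflexivity]. Qed.

Lemma RInt0_le_inv a b : RInt F 0 a <= RInt F 0 b -> a <= b.
Proof.
  intros H. destruct (Rle_lt_dec a b) as [Hab | Hba]; auto.
  pose proof (RInt0_lt b a Hba). lra.
Qed.

End Primitive.

Lemma is_derive_ext_val (g : R -> R) x l l' : is_derive g x l -> l = l' -> is_derive g x l'.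
Proof. now intros H <-. Qed.

Lemma RInt_exp_pair_le (C E c a s : R) : 0 <= C -> 0 <= E -> 0 < c -> a <= s ->
  RInt (fun u => C * exp (c * u) + E * exp (- c * u)) a s
  <= C * exp (c * s) / c + E * exp (- c * a) / c.
Proof.
  intros HC HE Hc Has.
  set (P := fun u => C * exp (c * u) / c - E * exp (- c * u) / c).
  assert (HP : is_RInt (fun u => C * exp (c * u) + E * exp (- c * u)) a s (minus (P s) (P a))).
  { apply (is_RInt_derive P).
    - intros x _. unfold P. auto_derive; auto. field. lra.
    - intros x _.
      apply (continuous_plus (fun u => C * exp (c * u)) (fun u => E * exp (- c * u))).
      + apply (continuous_scal_r C (fun u => exp (c * u))), continuous_exp_scal.
      + apply (continuous_scal_r E (fun u => exp (- c * u))), continuous_exp_scal. }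
  rewrite (is_RInt_unique _ a s _ HP). unfold minus, plus, opp, P; simpl.
  assert (0 <= C * exp (c * a) / c) by (apply Rle_mult_inv_pos; [pose proof (exp_pos (c * a)); nra | lra]).
  assert (0 <= E * exp (- c * s) / c) by (apply Rle_mult_inv_pos; [pose proof (exp_pos (- c * s)); nra | lra]).
  lra.
Qed.

Lemma is_derive_decay_RInt_comp (k g : R -> R) beta c a s dg :
  (forall x, continuous k x) -> is_derive g s dg ->
  is_derive (fun t => beta * exp (- c * t) * RInt k a (g t)) s
   (- c * (beta * exp (- c * s) * RInt k a (g s)) + beta * exp (- c * s) * (dg * k (g s))).
Proof.
  intros Hk Hg.
  apply is_derive_ext_val with (plus (mult (beta * (- c * exp (- c * s))) (RInt k a (g s)))
     (mult (beta * exp (- c * s)) (scal dg (k (g s))))).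
  - apply (is_derive_mult (fun t => beta * exp (- c * t)) (fun t => RInt k a (g t))).
    + apply (is_derive_scal (fun t => exp (- c * t))), is_derive_exp_scal.
    + apply (is_derive_comp (RInt k a) g); auto.
      apply is_derive_RInt with (a := a); [| apply Hk].
      apply filter_forall. intros y. apply RInt_correct, ex_RInt_cont, Hk.
    + intros; apply Rmult_comm.
  - unfold plus, mult, scal; simpl. unfold mult; simpl. ring.
Qed.

(** * Weighted Lipschitz functions and the space X_alpha *)

Lemma exp_lipschitz_nonpos alpha : 0 < alpha -> forall x y, x <= 0 -> y <= 0 ->
  Rabs (exp (alpha * y) - exp (alpha * x)) <= alpha * Rabs (y - x).
Proof.
  intros Halpha x y Hx Hy.
  apply (Rabs_sub_le_of_derive_bounded (fun u => exp (alpha * u)) (fun u => alpha * exp (alpha * u))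
    alpha (Rmin x y) 0); try lra.
  - intros; apply is_derive_exp_scal.
  - intros u Hu. pose proof (exp_pos (alpha * u)).
    assert (exp (alpha * u) <= 1) by (apply exp_le_1; nra).
    rewrite Rabs_pos_eq; nra.
  - intros; apply continuous_exp_scal.
  - split; [apply Rmin_l | auto].
  - split; [apply Rmin_r | auto].
Qed.

Lemma lipschitz_glue (psi : R -> R) c L : c <= 0 -> 0 <= L ->
  (forall x y, x <= c -> y <= c -> Rabs (psi y - psi x) <= L * Rabs (y - x)) ->
  (forall x y, c <= x <= 0 -> c <= y <= 0 -> Rabs (psi y - psi x) <= L * Rabs (y - x)) ->
  forall x y, x <= 0 -> y <= 0 -> Rabs (psi y - psi x) <= L * Rabs (y - x).
Proof.
  intros Hc HL Hleft Hright.
  assert (Hord : forall x y, x <= y -> x <= 0 -> y <= 0 -> Rabs (psi y - psi x) <= L * Rabs (y - x)).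
  { intros x y Hxy Hx Hy.
    destruct (Rle_dec y c) as [Hyc | Hyc]; [apply Hleft; lra |].
    destruct (Rle_dec c x) as [Hcx | Hcx]; [apply Hright; lra |].
    pose proof (Hleft x c ltac:(lra) ltac:(lra)) as Hxc.
    pose proof (Hright c y ltac:(lra) ltac:(lra)) as Hcy.
    replace (psi y - psi x) with ((psi y - psi c) + (psi c - psi x)) by ring.
    eapply Rle_trans; [apply Rabs_triang |].
    rewrite (Rabs_pos_eq (c - x)) in Hxc by lra. rewrite (Rabs_pos_eq (y - c)) in Hcy by lra.
    rewrite (Rabs_pos_eq (y - x)) by lra. lra. }
  intros x y Hx Hy. destruct (Rle_dec x y); [apply Hord; auto |].
  rewrite Rabs_minus_sym, (Rabs_minus_sym y x). apply Hord; auto; lra.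
Qed.

Lemma bounded_of_lipschitz (psi : R -> R) c L K : c <= 0 -> 0 <= L ->
  (forall x y, x <= 0 -> y <= 0 -> Rabs (psi y - psi x) <= L * Rabs (y - x)) ->
  (forall x, x <= c -> Rabs (psi x) <= K) ->
  forall x, x <= 0 -> Rabs (psi x) <= K + L * (- c).
Proof.
  intros Hc HL Hlip HK x Hx. destruct (Rle_dec x c) as [Hxc | Hxc].
  - pose proof (HK x Hxc). nra.
  - pose proof (Hlip c x Hc Hx) as Hcx. pose proof (HK c (Rle_refl c)).
    rewrite (Rabs_pos_eq (x - c)) in Hcx by lra.
    pose proof (Rabs_triang_inv (psi x) (psi c)). nra.
Qed.

Definition weighted (alpha : R) (g : R -> R) (x : R) := exp (- alpha * Rabs x) * g x.

Lemma in_X_of_lipschitz alpha (g : R -> R) c L K : c <= 0 -> 0 <= L ->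
  (forall x, continuous g x) ->
  (forall x y, x <= 0 -> y <= 0 ->
     Rabs (weighted alpha g y - weighted alpha g x) <= L * Rabs (y - x)) ->
  (forall x, x <= c -> Rabs (weighted alpha g x) <= K) ->
  in_X alpha g.
Proof.
  intros Hc HL Hcont Hlip HK. split; [| split; [| split]].
  - intros x _ eps Heps. destruct (continuous_eps_delta g x (Hcont x) eps Heps) as [d [Hd Hg]].
    exists d. split; auto.
  - exists (K + L * (- c)). apply (bounded_of_lipschitz _ c L K Hc HL Hlip HK).
  - intros eps Heps. exists (eps / (L + 1)). split; [apply Rdiv_lt_0_compat; lra |].
    intros x y Hx Hy Hxy. eapply Rle_lt_trans; [apply Hlip; auto |].
    apply Rle_lt_trans with ((L + 1) * Rabs (y - x)); [apply Rmult_le_compat_r; [apply Rabs_pos | lra] |].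
    apply Rmult_lt_reg_l with (/ (L + 1)); [apply Rinv_0_lt_compat; lra |].
    rewrite <- Rmult_assoc, Rinv_l, Rmult_1_l by lra.
    replace (/ (L + 1) * eps) with (eps / (L + 1)) by (unfold Rdiv; ring). auto.
  - exists L. auto.
Qed.



(** * Birth times under a maturation law *)

(* [t - tau t] is the birth time of the individuals maturing at time [t]: the
   maturation condition [RInt F (t - tau t) t = const] determines it implicitly. *)
Record delay_law (F tau : R -> R) (tau0 : R) : Prop := {
  delay_F_cont : forall x, continuous F x;
  delay_F_pos : forall x, 0 < F x;
  delay_tau_ge0 : forall t, 0 <= t -> 0 <= tau t;
  delay_RInt : forall t, 0 <= t -> RInt F (t - tau t) t = RInt F (- tau0) 0 }.

Section DelayLaw.

Variables (F tau : R -> R) (tau0 : R).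
Hypothesis Hdelay : delay_law F tau tau0.

Let F_cont := delay_F_cont F tau tau0 Hdelay.
Let F_pos := delay_F_pos F tau tau0 Hdelay.

Lemma birth_time_RInt0 t : 0 <= t ->
  RInt F 0 (t - tau t) = RInt F 0 t - (RInt F 0 0 - RInt F 0 (- tau0)).
Proof.
  intros Ht. pose proof (delay_RInt F tau tau0 Hdelay t Ht) as Heq.
  rewrite (RInt_sub0 F F_cont (t - tau t) t), (RInt_sub0 F F_cont (- tau0) 0) in Heq. lra.
Qed.

Lemma birth_time_le t : 0 <= t -> t - tau t <= t.
Proof. intros Ht. pose proof (delay_tau_ge0 F tau tau0 Hdelay t Ht). lra. Qed.

Lemma birth_time_ge t : 0 <= t -> - tau0 <= t - tau t.
Proof.
  intros Ht. apply (RInt0_le_inv F F_cont F_pos). rewrite (birth_time_RInt0 t Ht).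
  pose proof (RInt0_le F F_cont F_pos 0 t Ht). lra.
Qed.

Lemma birth_time_mono s t : 0 <= s -> s <= t -> s - tau s <= t - tau t.
Proof.
  intros Hs Hst. apply (RInt0_le_inv F F_cont F_pos).
  rewrite (birth_time_RInt0 s Hs), (birth_time_RInt0 t (Rle_trans _ _ _ Hs Hst)).
  pose proof (RInt0_le F F_cont F_pos s t Hst). lra.
Qed.

Lemma birth_time_eps_delta t : 0 < t -> forall eps, 0 < eps -> exists d, 0 < d /\
  forall y, Rabs (y - t) < d -> Rabs ((y - tau y) - (t - tau t)) < eps.
Proof.
  intros Ht eps Heps.
  set (x := t - tau t). set (G := RInt F 0).
  (* the primitive [G] is strictly increasing, so closeness of [G] values forces closeness of points *)
  assert (Hup : G x < G (x + eps)) by (apply RInt0_lt; auto; lra).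
  assert (Hdown : G (x - eps) < G x) by (apply RInt0_lt; auto; lra).
  set (d := Rmin (G (x + eps) - G x) (G x - G (x - eps))).
  assert (Hd : 0 < d) by (apply Rmin_glb_lt; lra).
  destruct (continuous_eps_delta G t (continuous_RInt0 F F_cont t) d Hd) as [r [Hr HG]].
  exists (Rmin r t). split; [apply Rmin_glb_lt; lra |].
  intros y Hy.
  pose proof (Rmin_l r t). pose proof (Rmin_r r t).
  assert (Hd_up : d <= G (x + eps) - G x) by apply Rmin_l.
  assert (Hd_down : d <= G x - G (x - eps)) by apply Rmin_r.
  assert (Hy0 : 0 <= y) by (apply Rabs_def2 in Hy; lra).
  pose proof (HG y ltac:(lra)) as HGy. apply Rabs_def2 in HGy. destruct HGy as [HGy1 HGy2].
  pose proof (birth_time_RInt0 y Hy0) as Ey. pose proof (birth_time_RInt0 t (Rlt_le _ _ Ht)) as Et.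
  fold G x in Ey, Et.
  apply Rabs_def1.
  - destruct (Rlt_le_dec (y - tau y - x) eps) as [Hlt | Hge]; auto.
    pose proof (RInt0_le F F_cont F_pos (x + eps) (y - tau y) ltac:(lra)) as Hmono.
    fold G in Hmono. lra.
  - destruct (Rlt_le_dec (- eps) (y - tau y - x)) as [Hlt | Hge]; auto.
    pose proof (RInt0_le F F_cont F_pos (y - tau y) (x - eps) ltac:(lra)) as Hmono.
    fold G in Hmono. lra.
Qed.

Lemma is_derive_birth_time t : 0 < t ->
  is_derive (fun s => s - tau s) t (F t / F (t - tau t)).
Proof.
  intros Ht. apply is_derive_Reals. intros eps Heps.
  set (x := t - tau t).
  destruct (Rdiv_eps_delta (F t) (F x) eps (F_pos x) Heps) as [e [He Hdiv]].
  destruct (continuous_eps_delta F t (F_cont t) e He) as [r1 [Hr1 HF1]].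
  destruct (continuous_eps_delta F x (F_cont x) e He) as [r2 [Hr2 HF2]].
  destruct (birth_time_eps_delta t Ht r2 Hr2) as [r3 [Hr3 Hbirth]].
  assert (Hd : 0 < Rmin r1 (Rmin r3 t)) by (repeat apply Rmin_glb_lt; lra).
  exists (mkposreal _ Hd). simpl. intros h Hh0 Hh.
  pose proof (Rmin_l r1 (Rmin r3 t)). pose proof (Rmin_r r1 (Rmin r3 t)).
  pose proof (Rmin_l r3 t). pose proof (Rmin_r r3 t).
  assert (Hth : 0 <= t + h) by (apply Rabs_def2 in Hh; lra).
  assert (Hx : Rabs ((t + h - tau (t + h)) - x) < r2)
    by (apply Hbirth; replace (t + h - t) with h by ring; lra).
  (* both increments of the primitive agree, and the MVT writes each as [F] at an intermediate point *)
  destruct (MVT_RInt0 F F_cont t (t + h)) as [eta [Heta Veta]].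
  destruct (MVT_RInt0 F F_cont x (t + h - tau (t + h))) as [xi [Hxi Vxi]].
  replace (t + h - t) with h in Heta, Veta by ring.
  pose proof (birth_time_RInt0 (t + h) Hth). pose proof (birth_time_RInt0 t (Rlt_le _ _ Ht)).
  fold x in H4.
  assert (Hq : (t + h - tau (t + h) - x) / h = F eta / F xi).
  { assert (Hcross : F xi * (t + h - tau (t + h) - x) = F eta * h) by lra.
    pose proof (F_pos xi).
    apply (Rmult_eq_reg_r (h * F xi)); [| apply Rmult_integral_contrapositive; lra].
    field_simplify; [| lra | lra]. lra. }
  rewrite Hq. apply Hdiv.
  - apply HF1. lra.
  - apply HF2. lra.
Qed.

End DelayLaw.

(** * Ultimate bound for a single species *)

(* A continuous substitute for the indicator of [(-oo, 0]]. *)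
Definition cutoff (u : R) := Rmax 0 (Rmin 1 (1 - u)).

Lemma cutoff_ge0 u : 0 <= cutoff u.
Proof. apply Rmax_l. Qed.

Lemma cutoff_le1 u : cutoff u <= 1.
Proof. unfold cutoff. apply Rmax_lub; [lra | apply Rmin_l]. Qed.

Lemma cutoff_nonpos u : u <= 0 -> cutoff u = 1.
Proof. intros. unfold cutoff. rewrite Rmin_left by lra. apply Rmax_right. lra. Qed.

Lemma cutoff_ge1 u : 1 <= u -> cutoff u = 0.
Proof. intros. unfold cutoff. rewrite Rmin_right by lra. apply Rmax_left. lra. Qed.

Lemma continuous_cutoff u : continuous cutoff u.
Proof.
  apply continuity_pt_filterlim, continuity_pt_locally. intros eps. exists eps. intros y Hy.
  change (Rabs (y - u) < eps) in Hy. unfold cutoff, Rmax, Rmin.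
  repeat destruct Rle_dec; unfold Rabs in *; repeat destruct Rcase_abs; lra.
Qed.

Section SingleSpecies.

Variables (mu muJ beta zeta delta : R) (f : R -> R).
Hypotheses (mu_pos : 0 < mu) (muJ_pos : 0 < muJ) (beta_pos : 0 < beta)
  (zeta_pos : 0 < zeta) (delta_pos : 0 < delta).

Definition rate := Rmin mu (muJ / 2).
Definition horizon := Rmax 1 (2 / muJ * ln (2 * beta / rate)).
Definition slow_survival := exp (- muJ * horizon / 2).

Lemma rate_pos : 0 < rate.
Proof. apply Rmin_glb_lt; lra. Qed.

Lemma rate_le_mu : rate <= mu.
Proof. apply Rmin_l. Qed.

Lemma rate_le_muJ : rate <= muJ / 2.
Proof. apply Rmin_r. Qed.

Lemma horizon_ge1 : 1 <= horizon.
Proof. apply Rmax_l. Qed.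

Lemma slow_survival_small : beta * slow_survival / rate <= 1 / 2.
Proof.
  pose proof rate_pos as Hrate.
  assert (Hln : ln (2 * beta / rate) <= muJ * horizon / 2).
  { assert (2 / muJ * ln (2 * beta / rate) <= horizon) by apply Rmax_r.
    apply Rmult_le_reg_l with (2 / muJ); [apply Rdiv_lt_0_compat; lra |].
    replace (2 / muJ * (muJ * horizon / 2)) with horizon by (field; lra). auto. }
  assert (Hs : slow_survival <= rate / (2 * beta)).
  { unfold slow_survival. rewrite <- (exp_ln (rate / (2 * beta))) by (apply Rdiv_lt_0_compat; lra).
    apply exp_le. rewrite ln_div by lra. rewrite ln_div in Hln by lra. lra. }
  apply Rmult_le_reg_r with rate; [lra |].
  replace (beta * slow_survival / rate * rate) with (beta * slow_survival) by (field; lra).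
  apply Rmult_le_compat_l with (r := beta) in Hs; [| lra].
  replace (beta * (rate / (2 * beta))) with (1 / 2 * rate) in Hs by (field; lra). exact Hs.
Qed.

Variable X : R.
Hypothesis f_small : forall x, X <= x -> f x < delta / horizon.

Definition fast_bound := exp (mu * horizon) * Rmax X 0 / zeta.
Definition level := fast_bound + 1.
Definition ultimate_bound := beta * level / rate.

Lemma level_pos : 0 < level.
Proof.
  unfold level, fast_bound. pose proof (exp_pos (mu * horizon)). pose proof (Rmax_r X 0).
  assert (0 <= exp (mu * horizon) * Rmax X 0 / zeta) by (apply Rle_mult_inv_pos; nra).
  lra.
Qed.

Lemma ultimate_bound_pos : 0 < ultimate_bound.
Proof.
  unfold ultimate_bound. pose proof level_pos. pose proof rate_pos.
  apply Rdiv_lt_0_compat; nra.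
Qed.

Section Trajectory.

Variables (tau0 : R) (A F tau : R -> R).

Definition recruitment (t : R) :=
  beta * exp (- muJ * tau t) * (F t / F (t - tau t)) * A (t - tau t).

(* [level] dominates [A] at the birth time of every cohort of maturation age below
   [horizon], the factor [slow_survival] dominates the survival of the others, and the
   [cutoff] term takes care of the birth times in the initial interval. *)
Definition majorant (u : R) := level + slow_survival * A u + cutoff u * A u.

(* [F] stands for [f_i (Z_i)], which [F_le] compares with the intraspecific term. *)
Hypotheses (A_cont : forall x, continuous A x) (A_ge0 : forall x, 0 <= A x)
  (Hdelay : delay_law F tau tau0) (F_le : forall x, F x <= f (zeta * A x))
  (delta_le : delta <= RInt F (- tau0) 0)
  (A_deriv : forall t, 0 < t -> is_derive A t (- mu * A t + recruitment t)).

Let F_cont := delay_F_cont F tau tau0 Hdelay.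
Let F_pos := delay_F_pos F tau tau0 Hdelay.

Lemma recruitment_ge0 t : 0 <= recruitment t.
Proof.
  unfold recruitment. pose proof (exp_pos (- muJ * tau t)).
  assert (0 < F t / F (t - tau t)) by (apply Rdiv_lt_0_compat; auto).
  pose proof (A_ge0 (t - tau t)).
  apply Rmult_le_pos; [| auto]. apply Rmult_le_pos; nra.
Qed.

Lemma recruitment_le_of_bounds s Am Fmax Fmin : 0 <= s -> 0 < Fmin ->
  F s <= Fmax -> Fmin <= F (s - tau s) -> A (s - tau s) <= Am ->
  recruitment s <= beta * (Fmax / Fmin) * Am.
Proof.
  intros Hs HFmin HFs HFb HAb. unfold recruitment.
  assert (Hq : F s / F (s - tau s) <= Fmax / Fmin).
  { unfold Rdiv. apply Rmult_le_compat; [apply Rlt_le, F_pos |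
      apply Rlt_le, Rinv_0_lt_compat, F_pos | exact HFs |].
    apply Rinv_le_contravar; [exact HFmin | exact HFb]. }
  assert (Hsurv : exp (- muJ * tau s) <= 1).
  { apply exp_le_1. pose proof (delay_tau_ge0 F tau tau0 Hdelay s Hs). nra. }
  pose proof (exp_pos (- muJ * tau s)). pose proof (A_ge0 (s - tau s)).
  pose proof (Rdiv_lt_0_compat _ _ (F_pos s) (F_pos (s - tau s))).
  apply Rmult_le_compat; [apply Rmult_le_pos; nra | auto | | exact HAb].
  replace (beta * (Fmax / Fmin)) with (beta * 1 * (Fmax / Fmin)) by ring.
  apply Rmult_le_compat; nra.
Qed.

Lemma exp_A_mono a b : 0 <= a -> a <= b -> exp (mu * a) * A a <= exp (mu * b) * A b.
Proof.
  intros Ha Hab.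
  assert (Hd : forall x, a < x < b -> is_derive (fun s => - (exp (mu * s) * A s)) x
     (- (exp (mu * x) * recruitment x))).
  { intros x Hx. apply is_derive_ext_val with
      (opp (plus (mult (mu * exp (mu * x)) (A x)) (mult (exp (mu * x)) (- mu * A x + recruitment x)))).
    - apply (is_derive_opp (fun s => exp (mu * s) * A s)).
      apply (is_derive_mult (fun s => exp (mu * s)) A).
      + apply is_derive_exp_scal.
      + apply A_deriv. lra.
      + intros; apply Rmult_comm.
    - unfold opp, plus, mult; simpl. ring. }
  assert (- (exp (mu * b) * A b) <= - (exp (mu * a) * A a)); [| lra].
  apply (le_of_derive_nonpos _ _ a b Hab Hd).
  - intros x _. pose proof (recruitment_ge0 x). pose proof (exp_pos (mu * x)).
    assert (0 <= exp (mu * x) * recruitment x) by (apply Rmult_le_pos; lra). lra.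
  - intros x _. apply (continuous_opp (fun s => exp (mu * s) * A s)).
    apply (continuous_mult (fun s => exp (mu * s)) A); [apply continuous_exp_scal | apply A_cont].
Qed.

Lemma fast_cohort_bound t : 0 <= t -> 0 <= t - tau t -> tau t < horizon ->
  A (t - tau t) <= fast_bound.
Proof.
  intros Ht Hbirth Hfast. pose proof horizon_ge1.
  destruct (Rle_lt_dec (A (t - tau t)) fast_bound) as [Hle | Hlarge]; auto. exfalso.
  (* a large population at the birth time keeps [f] below [delta / horizon] until
     maturation, so the maturation integral could not reach [delta] *)
  assert (Hsmall : forall r, t - tau t <= r <= t -> Rabs (F r) <= delta / horizon).
  { intros r Hr. rewrite Rabs_pos_eq by (apply Rlt_le, F_pos).
    pose proof (exp_A_mono (t - tau t) r Hbirth (proj1 Hr)) as Hgrowth.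
    assert (Hdecay : exp (- mu * horizon) * A (t - tau t) <= A r).
    { apply Rmult_le_reg_l with (exp (mu * r)); [apply exp_pos |].
      apply Rle_trans with (exp (mu * (t - tau t)) * A (t - tau t)); [| exact Hgrowth].
      rewrite <- Rmult_assoc, <- exp_plus. apply Rmult_le_compat_r; [apply A_ge0 |].
      apply exp_le. nra. }
    assert (Hfb : exp (- mu * horizon) * fast_bound = Rmax X 0 / zeta).
    { unfold fast_bound. replace (- mu * horizon) with (- (mu * horizon)) by ring.
      rewrite exp_Ropp. field. split; [lra | apply Rgt_not_eq, exp_pos]. }
    assert (Hbig : Rmax X 0 / zeta < A r).
    { rewrite <- Hfb. eapply Rlt_le_trans; [| exact Hdecay].
      apply Rmult_lt_compat_l; [apply exp_pos | exact Hlarge]. }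
    assert (HX : X <= zeta * A r).
    { pose proof (Rmax_l X 0).
      apply Rmult_lt_compat_l with (r := zeta) in Hbig; [| lra].
      replace (zeta * (Rmax X 0 / zeta)) with (Rmax X 0) in Hbig by (field; lra). lra. }
    pose proof (f_small _ HX). pose proof (F_le r). lra. }
  pose proof (delay_tau_ge0 F tau tau0 Hdelay t Ht).
  assert (Hhor : 0 < delta / horizon) by (apply Rdiv_lt_0_compat; lra).
  pose proof (abs_RInt_le_const F (t - tau t) t (delta / horizon) ltac:(lra)
    (ex_RInt_cont F F_cont _ _) Hsmall) as Hint.
  rewrite (delay_RInt F tau tau0 Hdelay t Ht) in Hint.
  replace (t - (t - tau t)) with (tau t) in Hint by ring.
  pose proof (Rle_abs (RInt F (- tau0) 0)).
  assert (Hlt : tau t * (delta / horizon) < horizon * (delta / horizon))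
    by (apply Rmult_lt_compat_r; lra).
  replace (horizon * (delta / horizon)) with delta in Hlt by (field; lra). lra.
Qed.

Lemma slow_survival_A_le_majorant u : slow_survival * A u <= majorant u.
Proof.
  unfold majorant. pose proof level_pos. pose proof (cutoff_ge0 u). pose proof (A_ge0 u). nra.
Qed.

Lemma majorant_ge0 u : 0 <= majorant u.
Proof.
  eapply Rle_trans; [| apply slow_survival_A_le_majorant].
  apply Rmult_le_pos; [apply Rlt_le, exp_pos | apply A_ge0].
Qed.

Lemma continuous_majorant u : continuous majorant u.
Proof.
  unfold majorant.
  apply (continuous_plus (fun u => level + slow_survival * A u) (fun u => cutoff u * A u)).
  - apply (continuous_plus (fun _ => level) (fun u => slow_survival * A u)); [apply continuous_const |].
    apply (continuous_mult (fun _ => slow_survival) A); [apply continuous_const | apply A_cont].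
  - apply (continuous_mult cutoff A); [apply continuous_cutoff | apply A_cont].
Qed.

Lemma continuous_exp_majorant u : continuous (fun u => exp (rate * u) * majorant u) u.
Proof.
  apply (continuous_mult (fun u => exp (rate * u)) majorant);
    [apply continuous_exp_scal | apply continuous_majorant].
Qed.

Lemma survival_le_majorant s : 0 < s ->
  exp (- muJ * tau s) * A (s - tau s) <= exp (- rate * tau s) * majorant (s - tau s).
Proof.
  intros Hs. pose proof (delay_tau_ge0 F tau tau0 Hdelay s (Rlt_le _ _ Hs)).
  pose proof rate_pos. pose proof rate_le_muJ.
  set (b := s - tau s).
  pose proof (A_ge0 b). pose proof (exp_pos (- muJ * tau s)). pose proof (exp_pos (- rate * tau s)).
  assert (Hrate : exp (- muJ * tau s) <= exp (- rate * tau s)) by (apply exp_le; nra).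
  destruct (Rlt_le_dec b 0) as [Hneg | Hb].
  - assert (A b <= majorant b).
    { unfold majorant. rewrite cutoff_nonpos by lra. pose proof level_pos.
      assert (0 <= slow_survival * A b) by (apply Rmult_le_pos; [apply Rlt_le, exp_pos | auto]). lra. }
    apply Rmult_le_compat; lra.
  - destruct (Rlt_le_dec (tau s) horizon) as [Hfast | Hslow].
    + pose proof (fast_cohort_bound s (Rlt_le _ _ Hs) Hb Hfast) as Hfb. fold b in Hfb.
      assert (A b <= majorant b).
      { unfold majorant, level.
        assert (0 <= slow_survival * A b) by (apply Rmult_le_pos; [apply Rlt_le, exp_pos | auto]).
        assert (0 <= cutoff b * A b) by (apply Rmult_le_pos; [apply cutoff_ge0 | auto]). lra. }
      apply Rmult_le_compat; lra.
    + assert (Hsurv : exp (- muJ * tau s) <= exp (- rate * tau s) * slow_survival).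
      { unfold slow_survival. rewrite <- exp_plus. apply exp_le. nra. }
      apply Rle_trans with (exp (- rate * tau s) * slow_survival * A b);
        [apply Rmult_le_compat_r; auto |].
      rewrite Rmult_assoc. apply Rmult_le_compat_l; [lra | apply slow_survival_A_le_majorant].
Qed.

Lemma recruitment_le_majorant x : 0 < x -> recruitment x <=
  beta * exp (- rate * x) * (F x / F (x - tau x) * (exp (rate * (x - tau x)) * majorant (x - tau x))).
Proof.
  intros Hx. pose proof (survival_le_majorant x Hx) as Hsurv.
  assert (Hq : 0 < F x / F (x - tau x)) by (apply Rdiv_lt_0_compat; auto).
  assert (Hexp : exp (- rate * x) * exp (rate * (x - tau x)) = exp (- rate * tau x))
    by (rewrite <- exp_plus; f_equal; ring).
  unfold recruitment.
  replace (beta * exp (- rate * x) * (F x / F (x - tau x) * (exp (rate * (x - tau x)) * majorant (x - tau x))))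
    with (beta * (F x / F (x - tau x)) * (exp (- rate * tau x) * majorant (x - tau x)))
    by (rewrite <- Hexp; ring).
  replace (beta * exp (- muJ * tau x) * (F x / F (x - tau x)) * A (x - tau x))
    with (beta * (F x / F (x - tau x)) * (exp (- muJ * tau x) * A (x - tau x))) by ring.
  apply Rmult_le_compat_l; [nra | exact Hsurv].
Qed.

(* [comparison] solves [Phi' = - rate Phi + S] with [Phi 1 = 0], where the source [S]
   dominates the recruitment by [survival_le_majorant]; as [rate <= mu], the function
   [e^(mu t) (A t - Phi t)] is then nonincreasing. *)
Definition comparison (s : R) :=
  beta * exp (- rate * s) * RInt (fun u => exp (rate * u) * majorant u) (1 - tau 1) (s - tau s).

Lemma is_derive_comparison s : 0 < s -> is_derive comparison s
  (- rate * comparison s + beta * exp (- rate * s) *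
     (F s / F (s - tau s) * (exp (rate * (s - tau s)) * majorant (s - tau s)))).
Proof.
  intros Hs. unfold comparison.
  apply (is_derive_decay_RInt_comp (fun u => exp (rate * u) * majorant u) (fun s => s - tau s));
    [apply continuous_exp_majorant | apply (is_derive_birth_time F tau tau0 Hdelay s Hs)].
Qed.

Lemma comparison_ge0 s : 1 <= s -> 0 <= comparison s.
Proof.
  intros Hs. unfold comparison. pose proof (exp_pos (- rate * s)).
  apply Rmult_le_pos; [nra |].
  apply RInt_ge_0; [apply (birth_time_mono F tau tau0 Hdelay 1 s); lra | |].
  - apply ex_RInt_cont, continuous_exp_majorant.
  - intros u _. apply Rmult_le_pos; [apply Rlt_le, exp_pos | apply majorant_ge0].
Qed.

Lemma A_le_comparison t : 1 <= t -> A t <= comparison t + exp (- mu * (t - 1)) * A 1.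
Proof.
  intros Ht. pose proof rate_le_mu.
  set (D := fun s => exp (mu * s) * (A s - comparison s)).
  set (dD := fun s => exp (mu * s) * ((rate - mu) * comparison s + (recruitment s -
    beta * exp (- rate * s) *
      (F s / F (s - tau s) * (exp (rate * (s - tau s)) * majorant (s - tau s)))))).
  assert (HdD : forall s, 0 < s -> is_derive D s (dD s)).
  { intros s Hs. eapply is_derive_ext_val.
    - apply (is_derive_mult (fun s => exp (mu * s)) (fun s => A s - comparison s)).
      + apply is_derive_exp_scal.
      + apply (is_derive_minus A comparison); [apply A_deriv | apply is_derive_comparison]; auto.
      + intros; apply Rmult_comm.
    - unfold minus, plus, opp, mult, dD; simpl. ring. }
  assert (HD : D t <= D 1).
  { apply (le_of_derive_nonpos D dD 1 t Ht).
    - intros x Hx. apply HdD. lra.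
    - intros x Hx. unfold dD.
      pose proof (recruitment_le_majorant x ltac:(lra)).
      assert (0 <= (mu - rate) * comparison x)
        by (apply Rmult_le_pos; [lra | apply comparison_ge0; lra]).
      rewrite <- (Rmult_0_r (exp (mu * x))).
      apply Rmult_le_compat_l; [apply Rlt_le, exp_pos | lra].
    - intros x Hx. apply (@ex_derive_continuous R_AbsRing R_NormedModule).
      eexists. apply HdD. lra. }
  assert (Hstart : comparison 1 = 0)
    by (unfold comparison; rewrite RInt_point; unfold zero; simpl; ring).
  unfold D in HD. rewrite Hstart, Rminus_0_r, Rmult_minus_distr_l in HD.
  assert (Hexp : exp (mu * t) * exp (- mu * (t - 1)) = exp (mu * 1))
    by (rewrite <- exp_plus; f_equal; ring).
  pose proof (exp_pos (mu * t)).
  apply Rmult_le_reg_l with (exp (mu * t)); auto.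
  rewrite Rmult_plus_distr_l, <- (Rmult_assoc (exp (mu * t)) (exp _)), Hexp. lra.
Qed.

Section Bootstrap.

Variable L0 : R.
Hypotheses (L0_ge0 : 0 <= L0) (A_le_L0 : forall u, 1 - tau 1 <= u <= 1 -> A u <= L0).

Definition transient (Y : R) :=
  beta * (slow_survival * Y + L0 * exp (2 * rate)) * exp (- rate * (1 - tau 1)) / rate.

Lemma transient_ge0 Y : 0 <= Y -> 0 <= transient Y.
Proof.
  intros HY. pose proof rate_pos. unfold transient, slow_survival.
  pose proof (exp_pos (- muJ * horizon / 2)). pose proof (exp_pos (2 * rate)).
  pose proof (exp_pos (- rate * (1 - tau 1))).
  apply Rle_mult_inv_pos; [| lra]. apply Rmult_le_pos; [apply Rmult_le_pos |]; nra.
Qed.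

Lemma exp_majorant_le X' Y u : 0 <= X' -> 0 <= Y -> 1 - tau 1 <= u ->
  A u <= X' + Y * exp (- 2 * rate * u) ->
  exp (rate * u) * majorant u <= (level + slow_survival * X') * exp (rate * u)
    + (slow_survival * Y + L0 * exp (2 * rate)) * exp (- rate * u).
Proof.
  intros HX' HY Hu HA. pose proof rate_pos.
  pose proof (exp_pos (- muJ * horizon / 2)) as Hsurv. fold slow_survival in Hsurv.
  assert (Hcut : cutoff u * A u <= L0 * exp (2 * rate) * exp (- 2 * rate * u)).
  { destruct (Rle_lt_dec u 1) as [Hu1 | Hu1].
    - pose proof (A_le_L0 u (conj Hu Hu1)). pose proof (cutoff_le1 u). pose proof (cutoff_ge0 u).
      pose proof (A_ge0 u).
      assert (1 <= exp (2 * rate) * exp (- 2 * rate * u))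
        by (rewrite <- exp_plus, <- exp_0; apply exp_le; nra).
      nra.
    - rewrite cutoff_ge1, Rmult_0_l by lra.
      pose proof (exp_pos (2 * rate)). pose proof (exp_pos (- 2 * rate * u)).
      apply Rmult_le_pos; nra. }
  assert (Hmaj : majorant u <= level + slow_survival * X'
      + (slow_survival * Y + L0 * exp (2 * rate)) * exp (- 2 * rate * u)).
  { unfold majorant. pose proof (exp_pos (- 2 * rate * u)). nra. }
  assert (Hexp : exp (rate * u) * exp (- 2 * rate * u) = exp (- rate * u))
    by (rewrite <- exp_plus; f_equal; ring).
  pose proof (exp_pos (rate * u)).
  apply Rle_trans with (exp (rate * u) * (level + slow_survival * X'
      + (slow_survival * Y + L0 * exp (2 * rate)) * exp (- 2 * rate * u)));
    [apply Rmult_le_compat_l; lra |].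
  right. rewrite <- Hexp. ring.
Qed.

Lemma RInt_exp_majorant_le X' Y s : 0 <= X' -> 0 <= Y -> 1 - tau 1 <= s ->
  (forall u, 1 - tau 1 <= u <= s -> A u <= X' + Y * exp (- 2 * rate * u)) ->
  RInt (fun u => exp (rate * u) * majorant u) (1 - tau 1) s <=
  (level + slow_survival * X') * exp (rate * s) / rate
  + (slow_survival * Y + L0 * exp (2 * rate)) * exp (- rate * (1 - tau 1)) / rate.
Proof.
  intros HX' HY Hs Hpast. pose proof rate_pos.
  pose proof (exp_pos (- muJ * horizon / 2)) as Hsurv. fold slow_survival in Hsurv.
  set (C := level + slow_survival * X'). set (E := slow_survival * Y + L0 * exp (2 * rate)).
  assert (HC : 0 <= C) by (unfold C; pose proof level_pos; nra).
  assert (HE : 0 <= E) by (unfold E; pose proof (exp_pos (2 * rate)); nra).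
  eapply Rle_trans; [| apply (RInt_exp_pair_le C E rate _ s HC HE); lra].
  apply RInt_le; auto.
  - apply ex_RInt_cont, continuous_exp_majorant.
  - apply ex_RInt_cont. intros x.
    apply (continuous_plus (fun u => C * exp (rate * u)) (fun u => E * exp (- rate * u))).
    + apply (continuous_scal_r C (fun u => exp (rate * u))), continuous_exp_scal.
    + apply (continuous_scal_r E (fun u => exp (- rate * u))), continuous_exp_scal.
  - intros u Hu. apply exp_majorant_le; auto; try lra. apply Hpast. lra.
Qed.

Lemma A_le_of_past_bound X' Y t : 1 <= t -> 0 <= X' -> 0 <= Y ->
  (forall u, 1 - tau 1 <= u <= t - tau t -> A u <= X' + Y * exp (- 2 * rate * u)) ->
  A t <= ultimate_bound + X' / 2 + transient Y * exp (- rate * t) + exp (- mu * (t - 1)) * A 1.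
Proof.
  intros Ht HX' HY Hpast. pose proof rate_pos.
  set (s := t - tau t).
  assert (Has : 1 - tau 1 <= s) by (apply (birth_time_mono F tau tau0 Hdelay 1 t); lra).
  assert (Hst : s <= t) by (apply (birth_time_le F tau tau0 Hdelay t); lra).
  pose proof (RInt_exp_majorant_le X' Y s HX' HY Has Hpast) as Hint.
  pose proof (A_le_comparison t Ht) as Hcomp. unfold comparison in Hcomp. fold s in Hcomp.
  set (C := level + slow_survival * X') in Hint.
  assert (HC : 0 <= beta * C / rate).
  { assert (Hsurv : 0 < slow_survival) by apply exp_pos. pose proof level_pos.
    pose proof (Rmult_le_pos _ _ (Rlt_le _ _ Hsurv) HX').
    apply Rle_mult_inv_pos; [apply Rmult_le_pos; unfold C; lra | lra]. }
  assert (Hlead : beta * C / rate <= ultimate_bound + X' / 2).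
  { pose proof slow_survival_small. unfold ultimate_bound, C.
    replace (beta * (level + slow_survival * X') / rate)
      with (beta * level / rate + beta * slow_survival / rate * X') by (field; lra).
    nra. }
  assert (Hts : exp (- rate * t) * exp (rate * s) <= 1)
    by (rewrite <- exp_plus; apply exp_le_1; nra).
  pose proof (exp_pos (- rate * t)).
  assert (Hphi : beta * exp (- rate * t) * RInt (fun u => exp (rate * u) * majorant u) (1 - tau 1) s
      <= beta * C / rate * (exp (- rate * t) * exp (rate * s)) + transient Y * exp (- rate * t)).
  { unfold transient. eapply Rle_trans; [apply Rmult_le_compat_l; [nra | exact Hint] |].
    right. field. lra. }
  assert (beta * C / rate * (exp (- rate * t) * exp (rate * s)) <= beta * C / rate) by nra.
  lra.
Qed.

Lemma A_bounded : exists K, 0 <= K /\ forall u, 1 - tau 1 <= u -> A u <= K.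
Proof.
  set (a := 1 - tau 1).
  pose proof ultimate_bound_pos. pose proof (transient_ge0 0 (Rle_refl 0)).
  exists (L0 + 2 * (ultimate_bound + transient 0 + L0)). split; [lra |].
  intros u Hu. destruct (Rle_lt_dec u 1) as [Hu1 | Hu1].
  { pose proof (A_le_L0 u (conj Hu Hu1)). lra. }
  (* bound [A] on [[a, u]] by its value at a maximum point [m], which controls its own past *)
  destruct (continuity_ab_maj A a u Hu) as [m [Hmax Hm]].
  { intros; apply continuity_pt_filterlim, A_cont. }
  apply Rle_trans with (A m); [apply Hmax; lra |].
  destruct (Rle_lt_dec m 1) as [Hm1 | Hm1].
  { pose proof (A_le_L0 m (conj (proj1 Hm) Hm1)). lra. }
  assert (Hbirth : m - tau m <= m) by (apply (birth_time_le F tau tau0 Hdelay m); lra).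
  pose proof (A_le_of_past_bound (A m) 0 m (Rlt_le _ _ Hm1) (A_ge0 m) (Rle_refl 0)) as Hself.
  assert (Hpast : forall v, a <= v <= m - tau m -> A v <= A m + 0 * exp (- 2 * rate * v)).
  { intros v Hv. rewrite Rmult_0_l, Rplus_0_r. apply Hmax. lra. }
  specialize (Hself Hpast).
  assert (exp (- rate * m) <= 1) by (apply exp_le_1; pose proof rate_pos; nra).
  assert (exp (- mu * (m - 1)) <= 1) by (apply exp_le_1; nra).
  assert (A 1 <= L0).
  { apply A_le_L0. pose proof (delay_tau_ge0 F tau tau0 Hdelay 1 ltac:(lra)). lra. }
  pose proof (A_ge0 1). pose proof (exp_pos (- rate * m)). pose proof (exp_pos (- mu * (m - 1))).
  assert (transient 0 * exp (- rate * m) <= transient 0) by nra.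
  assert (exp (- mu * (m - 1)) * A 1 <= L0) by nra.
  lra.
Qed.

Variable K : R.
Hypotheses (K_ge0 : 0 <= K) (A_le_K : forall u, 1 - tau 1 <= u -> A u <= K).

(* An eventual bound [X'] improves to [ultimate_bound + X' / 2]; the past before [s]
   only enters the transient term. *)
Lemma A_eventually_le_half X' s : 0 <= X' -> (forall u, s <= u -> A u <= X') ->
  forall eta, 0 < eta -> exists T, forall t, T <= t -> A t <= ultimate_bound + X' / 2 + eta.
Proof.
  intros HX' Hs eta Heta. pose proof rate_pos as Hrate.
  set (Y := K * exp (2 * rate * s)).
  assert (HY : 0 <= Y) by (unfold Y; pose proof (exp_pos (2 * rate * s)); nra).
  destruct (exp_scal_eventually_le (transient Y) rate (eta / 2) (transient_ge0 Y HY) Hrate ltac:(lra))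
    as [T1 HT1].
  assert (HA1 : 0 <= exp mu * A 1) by (pose proof (exp_pos mu); pose proof (A_ge0 1); nra).
  destruct (exp_scal_eventually_le (exp mu * A 1) mu (eta / 2) HA1 mu_pos ltac:(lra)) as [T2 HT2].
  exists (Rmax 1 (Rmax T1 T2)). intros t Ht.
  pose proof (Rmax_l 1 (Rmax T1 T2)). pose proof (Rmax_r 1 (Rmax T1 T2)).
  pose proof (Rmax_l T1 T2). pose proof (Rmax_r T1 T2).
  assert (Hpast : forall u, 1 - tau 1 <= u <= t - tau t -> A u <= X' + Y * exp (- 2 * rate * u)).
  { intros u Hu. pose proof (exp_pos (- 2 * rate * u)).
    destruct (Rle_lt_dec s u) as [Hsu | Hsu].
    - pose proof (Hs u Hsu). nra.
    - pose proof (A_le_K u (proj1 Hu)).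
      assert (1 <= exp (2 * rate * s) * exp (- 2 * rate * u))
        by (rewrite <- exp_plus, <- exp_0; apply exp_le; nra).
      unfold Y. nra. }
  pose proof (A_le_of_past_bound X' Y t ltac:(lra) HX' HY Hpast).
  pose proof (HT1 t ltac:(lra)). pose proof (HT2 t ltac:(lra)).
  assert (exp (- mu * (t - 1)) * A 1 = exp mu * A 1 * exp (- mu * t)).
  { replace (- mu * (t - 1)) with (mu + - mu * t) by ring. rewrite exp_plus. ring. }
  lra.
Qed.

Lemma A_eventually_le_geometric eps : 0 < eps -> forall k, exists s, forall t, s <= t ->
  A t <= 2 * ultimate_bound + K * (/ 2) ^ k + eps.
Proof.
  intros Heps k. pose proof ultimate_bound_pos. induction k as [| k [s Hs]].
  - exists (1 - tau 1). intros t Ht. simpl. pose proof (A_le_K t Ht). lra.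
  - assert (0 < (/ 2) ^ k) by (apply pow_lt; lra).
    destruct (A_eventually_le_half (2 * ultimate_bound + K * (/ 2) ^ k + eps) s ltac:(nra) Hs
      (eps / 2) ltac:(lra)) as [T HT].
    exists T. intros t Ht. pose proof (HT t Ht). simpl. lra.
Qed.

End Bootstrap.

Lemma A_limsup_le eps : 0 < eps -> exists T, forall t, T <= t -> A t <= 2 * ultimate_bound + eps.
Proof.
  intros Heps.
  assert (Ha : 1 - tau 1 <= 1) by (apply (birth_time_le F tau tau0 Hdelay 1); lra).
  destruct (continuity_ab_maj A (1 - tau 1) 1 Ha) as [m [Hmax Hm]].
  { intros; apply continuity_pt_filterlim, A_cont. }
  destruct (A_bounded (A m) (A_ge0 m) Hmax) as [K [HK HA]].
  destruct (half_pow_eventually_le K (eps / 2) HK ltac:(lra)) as [N HN].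
  destruct (A_eventually_le_geometric (A m) (A_ge0 m) Hmax K HK HA (eps / 2) ltac:(lra) N)
    as [s Hs].
  exists s. intros t Ht. pose proof (Hs t Ht). lra.
Qed.

End Trajectory.

End SingleSpecies.

(** * Solutions of the n-species system *)

Lemma sumR_ext m (g g' : nat -> R) : (forall j, (j < m)%nat -> g j = g' j) -> sumR m g = sumR m g'.
Proof.
  induction m as [| m IH]; intros H; simpl; auto.
  rewrite IH by (intros; apply H; lia). rewrite H by lia. reflexivity.
Qed.

Lemma sumR_ge0 m (g : nat -> R) : (forall j, (j < m)%nat -> 0 <= g j) -> 0 <= sumR m g.
Proof.
  induction m as [| m IH]; intros H; simpl; [lra |].
  pose proof (IH ltac:(intros; apply H; lia)). pose proof (H m ltac:(lia)). lra.
Qed.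

Lemma sumR_ge_term m (g : nat -> R) : (forall j, (j < m)%nat -> 0 <= g j) ->
  forall k, (k < m)%nat -> g k <= sumR m g.
Proof.
  induction m as [| m IH]; intros H k Hk; [lia | simpl].
  destruct (Nat.eq_dec k m) as [-> | Hkm].
  - pose proof (sumR_ge0 m g ltac:(intros; apply H; lia)). lra.
  - pose proof (IH ltac:(intros; apply H; lia) k ltac:(lia)). pose proof (H m ltac:(lia)). lra.
Qed.

Lemma continuous_sumR m (g : nat -> R -> R) x :
  (forall j, (j < m)%nat -> continuous (g j) x) ->
  continuous (fun s => sumR m (fun j => g j s)) x.
Proof.
  induction m as [| m IH]; intros H; simpl; [apply continuous_const |].
  apply (continuous_plus (fun s => sumR m (fun j => g j s)) (g m)).
  - apply IH. intros; apply H; lia.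
  - apply H; lia.
Qed.

Lemma ex_common_bound n (P : nat -> R -> Prop) :
  (forall i x y, x <= y -> P i x -> P i y) ->
  (forall i, (i < n)%nat -> exists x, P i x) -> exists x, forall i, (i < n)%nat -> P i x.
Proof.
  intros Hup. induction n as [| n IH]; intros H.
  - exists 0. intros; lia.
  - destruct IH as [x Hx]; [intros; apply H; lia |].
    destruct (H n ltac:(lia)) as [y Hy].
    exists (Rmax x y). intros i Hi. destruct (Nat.eq_dec i n) as [-> | Hin].
    + apply Hup with y; [apply Rmax_r | auto].
    + apply Hup with x; [apply Rmax_l | apply Hx; lia].
Qed.

Lemma is_derive_of_deriv_nonneg (g : R -> R) t l : 0 < t -> deriv_nonneg g t l -> is_derive g t l.
Proof.
  intros Ht H. apply is_derive_Reals. intros eps Heps.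
  destruct (H eps Heps) as [d [Hd Hdq]].
  assert (Hdt : 0 < Rmin d t) by (apply Rmin_glb_lt; lra).
  exists (mkposreal _ Hdt). simpl. intros h Hh0 Hh.
  pose proof (Rmin_l d t). pose proof (Rmin_r d t).
  apply Hdq; auto; [| lra]. apply Rabs_def2 in Hh. lra.
Qed.

Section AssumptionA.

Variable fi : R -> R.
Hypothesis Hfi : f_hyp fi.

Lemma f_hyp_continuous x : continuous fi x.
Proof.
  destruct Hfi as [_ [[fi' [Hd _]] _]].
  apply (@ex_derive_continuous R_AbsRing R_NormedModule).
  exists (fi' x). apply is_derive_Reals, Hd.
Qed.

Lemma f_hyp_antitone x y : x <= y -> fi y <= fi x.
Proof.
  destruct Hfi as [_ [[fi' [Hd [_ Hneg]]] _]]. intros Hxy.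
  apply (le_of_derive_nonpos fi fi' x y Hxy).
  - intros; apply is_derive_Reals, Hd.
  - intros; apply Hneg.
  - intros; apply f_hyp_continuous.
Qed.

Lemma f_hyp_pos x : 0 < fi x.
Proof. apply Hfi. Qed.

Lemma f_hyp_eventually_lt eps : 0 < eps -> exists X, forall x, X <= x -> fi x < eps.
Proof.
  destruct Hfi as [_ [_ [_ [Hlim _]]]]. intros Heps.
  destruct (Hlim eps Heps) as [X HX]. exists X. intros x Hx.
  pose proof (HX x Hx). pose proof (Rle_abs (fi x)). lra.
Qed.

End AssumptionA.

Lemma continuous_Zof n zeta (A : nat -> R -> R) i :
  (forall j, (j < n)%nat -> continuity (A j)) -> forall x, continuous (Zof n zeta A i) x.
Proof.
  intros H x. apply (continuous_sumR n (fun j s => zeta i j * A j s)). intros j Hj.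
  apply (continuous_mult (fun _ => zeta i j) (A j)); [apply continuous_const |].
  apply continuity_pt_filterlim, H; auto.
Qed.

Lemma Zof_ge_diag n zeta (A : nat -> R -> R) i s : (forall j, (j < n)%nat -> 0 <= zeta i j) ->
  (forall j, (j < n)%nat -> 0 <= A j s) -> (i < n)%nat -> zeta i i * A i s <= Zof n zeta A i s.
Proof.
  intros Hz HA Hi. apply (sumR_ge_term n (fun j => zeta i j * A j s)); auto.
  intros j Hj. apply Rmult_le_pos; auto.
Qed.

Lemma Zof_ext n zeta (A B : nat -> R -> R) i s :
  (forall j, (j < n)%nat -> A j s = B j s) -> Zof n zeta A i s = Zof n zeta B i s.
Proof. intros H. apply sumR_ext. intros j Hj. rewrite H; auto. Qed.

Section Solution.

Variables (n : nat) (alpha delta : R) (muA muJ beta : nat -> R) (zeta : nat -> nat -> R)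
  (f : nat -> R -> R) (phi : nat -> R -> R) (tau0 : nat -> R) (A tau : nat -> R -> R).
Hypotheses (HA : assumptionA n muA muJ beta zeta f)
  (Hsol : is_solution n muA muJ beta zeta f phi tau0 A tau).

Variable i : nat.
Hypothesis Hi : (i < n)%nat.

Let Hfi : f_hyp (f i) := proj2 (proj2 (proj2 (proj2 (proj2 (HA i Hi))))).

Lemma solution_continuous j : (j < n)%nat -> continuity (A j).
Proof. intros Hj. apply (Hsol j Hj). Qed.

Lemma solution_ge0 t : 0 <= A i t.
Proof. apply (Hsol i Hi). Qed.

Lemma solution_tau0_ge0 : 0 <= tau0 i.
Proof.
  destruct (Hsol i Hi) as [_ [_ [_ [Htau0 [Htau _]]]]]. rewrite <- Htau0. apply Htau. lra.
Qed.

Lemma continuous_solution_rate x : continuous (fun s => f i (Zof n zeta A i s)) x.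
Proof.
  apply (continuous_comp (Zof n zeta A i) (f i));
    [apply continuous_Zof, solution_continuous | apply f_hyp_continuous, Hfi].
Qed.

Lemma solution_RInt_initial :
  RInt (fun s => f i (Zof n zeta A i s)) (- tau0 i) 0
  = RInt (fun s => f i (Zof n zeta phi i s)) (- tau0 i) 0.
Proof.
  pose proof solution_tau0_ge0. apply RInt_ext. intros x Hx. rewrite Rmax_right in Hx by lra.
  f_equal. apply Zof_ext. intros j Hj. apply (Hsol j Hj). lra.
Qed.

Lemma solution_delay_law : delay_law (fun s => f i (Zof n zeta A i s)) (tau i) (tau0 i).
Proof.
  destruct (Hsol i Hi) as [_ [_ [_ [_ [Htau [_ Hint]]]]]].
  split; [apply continuous_solution_rate | intros; apply f_hyp_pos, Hfi | exact Htau |].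
  intros t Ht. destruct (Hint t Ht) as [pr1 [pr2 Heq]].
  rewrite solution_RInt_initial, (RInt_Reals _ _ _ pr1), (RInt_Reals _ _ _ pr2). exact Heq.
Qed.

Let Hdelay := solution_delay_law.

Lemma solution_rate_le s : f i (Zof n zeta A i s) <= f i (zeta i i * A i s).
Proof.
  pose proof (HA i Hi) as [_ [_ [_ [_ [Hz _]]]]].
  apply (f_hyp_antitone (f i) Hfi), Zof_ge_diag; auto.
  intros j Hj. apply (Hsol j Hj).
Qed.

Lemma solution_is_derive t : 0 < t -> is_derive (A i) t
  (- muA i * A i t + recruitment (muJ i) (beta i) (A i) (fun s => f i (Zof n zeta A i s)) (tau i) t).
Proof.
  intros Ht. apply is_derive_of_deriv_nonneg; auto.
  unfold recruitment; cbv beta.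
  destruct (Hsol i Hi) as [_ [_ [_ [_ [_ [Hder _]]]]]]. apply Hder. lra.
Qed.

Lemma solution_delta_le : in_D n alpha zeta f delta phi tau0 ->
  delta <= RInt (fun s => f i (Zof n zeta A i s)) (- tau0 i) 0.
Proof.
  intros HD. destruct (HD i Hi) as [_ [_ [pr Hpr]]].
  rewrite solution_RInt_initial, (RInt_Reals _ _ _ pr). exact Hpr.
Qed.

Lemma solution_rhs_bounded t : 0 <= t -> exists K, 0 <= K /\ forall s, 0 <= s <= t ->
  Rabs (- muA i * A i s + recruitment (muJ i) (beta i) (A i)
    (fun s => f i (Zof n zeta A i s)) (tau i) s) <= K.
Proof.
  intros Ht. pose proof solution_tau0_ge0.
  pose proof (HA i Hi) as [HmuA [HmuJ [Hbeta [_ [Hz _]]]]].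
  set (F := fun s => f i (Zof n zeta A i s)).
  assert (Hint : - tau0 i <= t) by lra.
  destruct (continuity_ab_maj (A i) (- tau0 i) t Hint) as [m [Hm _]].
  { intros; eapply solution_continuous; eauto. }
  destruct (continuity_ab_maj (Zof n zeta A i) (- tau0 i) t Hint) as [z [Hz_max _]].
  { intros. apply continuity_pt_filterlim, continuous_Zof. intros j Hj.
    eapply solution_continuous; eauto. }
  assert (HF_up : forall s, F s <= f i 0).
  { intros s. apply (f_hyp_antitone (f i) Hfi). apply sumR_ge0. intros j Hj.
    apply Rmult_le_pos; [apply Hz; auto | apply (Hsol j Hj)]. }
  assert (HF_low : forall s, - tau0 i <= s <= t -> f i (Zof n zeta A i z) <= F s)
    by (intros s Hs; apply (f_hyp_antitone (f i) Hfi), Hz_max; auto).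
  pose proof (f_hyp_pos (f i) Hfi (Zof n zeta A i z)) as Hfz.
  pose proof (f_hyp_pos (f i) Hfi 0) as Hf0.
  pose proof (solution_ge0 m).
  assert (Hratio : 0 <= f i 0 / f i (Zof n zeta A i z)) by (apply Rlt_le, Rdiv_lt_0_compat; auto).
  exists (muA i * A i m + beta i * (f i 0 / f i (Zof n zeta A i z)) * A i m).
  split; [apply Rplus_le_le_0_compat; apply Rmult_le_pos; nra |].
  intros s Hs.
  pose proof (birth_time_ge F (tau i) (tau0 i) Hdelay s (proj1 Hs)).
  pose proof (birth_time_le F (tau i) (tau0 i) Hdelay s (proj1 Hs)).
  pose proof (recruitment_ge0 (muJ i) (beta i) Hbeta (tau0 i) (A i) F (tau i)
    solution_ge0 Hdelay s) as Hrec0.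
  pose proof (recruitment_le_of_bounds (muJ i) (beta i) HmuJ Hbeta (tau0 i) (A i) F (tau i)
    solution_ge0 Hdelay s (A i m) (f i 0) (f i (Zof n zeta A i z)) (proj1 Hs) Hfz
    (HF_up s) ltac:(apply HF_low; lra) ltac:(apply Hm; lra)) as Hrec.
  assert (A i s <= A i m) by (apply Hm; lra).
  pose proof (solution_ge0 s).
  unfold Rabs. destruct Rcase_abs; nra.
Qed.

Lemma solution_lipschitz t : 0 <= t -> exists K, 0 <= K /\
  forall x y, 0 <= x <= t -> 0 <= y <= t -> Rabs (A i y - A i x) <= K * Rabs (y - x).
Proof.
  intros Ht. destruct (solution_rhs_bounded t Ht) as [K [HK Hrhs]].
  exists K. split; auto.
  apply (Rabs_sub_le_of_derive_bounded (A i) (fun s => - muA i * A i s +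
    recruitment (muJ i) (beta i) (A i) (fun s => f i (Zof n zeta A i s)) (tau i) s) K 0 t HK).
  - intros x Hx. eapply solution_is_derive; eauto. lra.
  - intros x Hx. apply Hrhs. lra.
  - intros x _. apply continuity_pt_filterlim. eapply solution_continuous; eauto.
Qed.

Lemma weighted_shift_left t x : 0 <= t -> x <= - t ->
  weighted alpha (fun theta => A i (t + theta)) x = exp (- alpha * t) * weighted alpha (phi i) (t + x).
Proof.
  intros Ht Hx. unfold weighted. destruct (Hsol i Hi) as [_ [_ [Hinit _]]]. rewrite Hinit by lra.
  rewrite (Rabs_left1 x), (Rabs_left1 (t + x)) by lra.
  rewrite <- Rmult_assoc, <- exp_plus. f_equal. f_equal. ring.
Qed.

Lemma weighted_shift_right t x : - t <= x <= 0 ->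
  weighted alpha (fun theta => A i (t + theta)) x = exp (alpha * x) * A i (t + x).
Proof. intros Hx. unfold weighted. rewrite (Rabs_left1 x) by lra. f_equal. f_equal. ring. Qed.

Lemma weighted_shift_lipschitz_right t : 0 < alpha -> 0 <= t -> exists L, 0 <= L /\
  forall x y, - t <= x <= 0 -> - t <= y <= 0 ->
  Rabs (weighted alpha (fun theta => A i (t + theta)) y
        - weighted alpha (fun theta => A i (t + theta)) x) <= L * Rabs (y - x).
Proof.
  intros Halpha Ht.
  destruct (solution_lipschitz t Ht) as [K [HK HlipA]].
  destruct (continuity_ab_maj (A i) 0 t Ht) as [m [Hm _]].
  { intros; eapply solution_continuous; eauto. }
  exists (K + alpha * A i m). split; [pose proof (solution_ge0 m); nra |].
  intros x y Hx Hy. rewrite (weighted_shift_right t x Hx), (weighted_shift_right t y Hy).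
  replace (exp (alpha * y) * A i (t + y) - exp (alpha * x) * A i (t + x)) with
    (exp (alpha * y) * (A i (t + y) - A i (t + x))
     + A i (t + x) * (exp (alpha * y) - exp (alpha * x))) by ring.
  eapply Rle_trans; [apply Rabs_triang |]. rewrite !Rabs_mult.
  rewrite (Rabs_pos_eq (exp _)), (Rabs_pos_eq (A i (t + x))) by (apply Rlt_le, exp_pos || apply solution_ge0).
  pose proof (HlipA (t + x) (t + y) ltac:(lra) ltac:(lra)) as HAxy.
  replace (t + y - (t + x)) with (y - x) in HAxy by ring.
  pose proof (exp_lipschitz_nonpos alpha Halpha x y ltac:(lra) ltac:(lra)) as Hexp.
  assert (exp (alpha * y) <= 1) by (apply exp_le_1; nra).
  pose proof (exp_pos (alpha * y)).
  assert (A i (t + x) <= A i m) by (apply Hm; lra). pose proof (solution_ge0 (t + x)).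
  pose proof (Rabs_pos (y - x)). pose proof (Rabs_pos (A i (t + y) - A i (t + x))).
  pose proof (Rabs_pos (exp (alpha * y) - exp (alpha * x))).
  assert (exp (alpha * y) * Rabs (A i (t + y) - A i (t + x)) <= K * Rabs (y - x)) by nra.
  assert (A i (t + x) * Rabs (exp (alpha * y) - exp (alpha * x)) <= A i m * (alpha * Rabs (y - x)))
    by nra.
  nra.
Qed.

Lemma shift_in_X t : 0 < alpha -> in_X alpha (phi i) -> 0 <= t ->
  in_X alpha (fun theta => A i (t + theta)).
Proof.
  intros Halpha [_ [[Kphi HKphi] [_ [Lphi HLphi]]]] Ht.
  destruct (weighted_shift_lipschitz_right t Halpha Ht) as [L [HL Hright]].
  assert (Hdamp : 0 < exp (- alpha * t) <= 1) by (split; [apply exp_pos | apply exp_le_1; nra]).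
  apply (in_X_of_lipschitz alpha _ (- t) (Rmax L (Rabs Lphi)) Kphi);
    [lra | eapply Rle_trans; [apply Rabs_pos | apply Rmax_r] | | |].
  - intros x. apply (continuous_comp (fun th => t + th) (A i)).
    + apply (continuous_plus (fun _ => t) (fun th => th)); [apply continuous_const | apply continuous_id].
    + apply continuity_pt_filterlim. eapply solution_continuous; eauto.
  - apply (lipschitz_glue _ (- t)); [lra | eapply Rle_trans; [apply Rabs_pos | apply Rmax_r] | |].
    + intros x y Hx Hy. rewrite (weighted_shift_left t x Ht Hx), (weighted_shift_left t y Ht Hy).
      rewrite <- Rmult_minus_distr_l, Rabs_mult, (Rabs_pos_eq (exp _)) by lra.
      pose proof (HLphi (t + x) (t + y) ltac:(lra) ltac:(lra)) as Hphi.
      replace (t + y - (t + x)) with (y - x) in Hphi by ring.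
      change (Rabs (weighted alpha (phi i) (t + y) - weighted alpha (phi i) (t + x))
        <= Lphi * Rabs (y - x)) in Hphi.
      pose proof (Rle_trans _ _ _ (Rle_abs Lphi) (Rmax_r L (Rabs Lphi))).
      pose proof (Rabs_pos (y - x)).
      pose proof (Rabs_pos (weighted alpha (phi i) (t + y) - weighted alpha (phi i) (t + x))).
      apply Rle_trans with (1 * (Lphi * Rabs (y - x))); [apply Rmult_le_compat; lra | nra].
    + intros x y Hx Hy. eapply Rle_trans; [apply Hright; auto |].
      apply Rmult_le_compat_r; [apply Rabs_pos | apply Rmax_l].
  - intros x Hx. rewrite (weighted_shift_left t x Ht Hx), Rabs_mult, (Rabs_pos_eq (exp _)) by lra.
    pose proof (HKphi (t + x) ltac:(lra)) as Hbound.
    change (Rabs (weighted alpha (phi i) (t + x)) <= Kphi) in Hbound.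
    pose proof (Rabs_pos (weighted alpha (phi i) (t + x))). nra.
Qed.

Lemma shift_RInt t : 0 <= t ->
  exists pr : Riemann_integrable
    (fun s => f i (Zof n zeta (fun j theta => A j (t + theta)) i s)) (- tau i t) 0,
  RiemannInt pr = RInt (fun s => f i (Zof n zeta A i s)) (- tau0 i) 0.
Proof.
  intros Ht.
  set (F := fun s => f i (Zof n zeta A i s)).
  assert (HFt : forall x, continuous (fun s => F (t + s)) x).
  { intros x. apply (continuous_comp (fun s => t + s) F).
    - apply (continuous_plus (fun _ => t) (fun s => s)); [apply continuous_const | apply continuous_id].
    - apply (delay_F_cont F (tau i) (tau0 i) Hdelay). }
  exists (ex_RInt_Reals_0 _ _ _ (ex_RInt_cont _ HFt (- tau i t) 0)).
  rewrite <- RInt_Reals.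
  rewrite <- (delay_RInt F (tau i) (tau0 i) Hdelay t Ht).
  transitivity (RInt (fun y => scal 1 (F (1 * y + t))) (- tau i t) 0).
  - apply RInt_ext. intros x _. change (scal 1 (F (1 * x + t))) with (1 * F (1 * x + t)).
    replace (1 * x + t) with (t + x) by ring. rewrite Rmult_1_l. reflexivity.
  - eapply eq_trans; [apply (RInt_comp_lin F 1 t (- tau i t) 0) |].
    + apply ex_RInt_cont, (delay_F_cont F (tau i) (tau0 i) Hdelay).
    + f_equal; ring.
Qed.

End Solution.

Lemma species_eventually_bounded n muA muJ beta zeta f i :
  assumptionA n muA muJ beta zeta f -> (i < n)%nat -> forall delta, 0 < delta ->
  exists M, forall alpha phi tau0 A tau,
    in_D n alpha zeta f delta phi tau0 -> is_solution n muA muJ beta zeta f phi tau0 A tau ->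
    forall eps, 0 < eps -> exists T, forall t, T <= t -> A i t <= M + eps.
Proof.
  intros HA Hi delta Hdelta.
  pose proof (HA i Hi) as [HmuA [HmuJ [Hbeta [Hzeta [_ Hfi]]]]].
  pose proof (horizon_ge1 (muA i) (muJ i) (beta i)).
  destruct (f_hyp_eventually_lt (f i) Hfi (delta / horizon (muA i) (muJ i) (beta i)))
    as [X HX]; [apply Rdiv_lt_0_compat; lra |].
  exists (2 * ultimate_bound (muA i) (muJ i) (beta i) (zeta i i) X).
  intros alpha phi tau0 A tau HD Hsol eps Heps.
  apply (A_limsup_le (muA i) (muJ i) (beta i) (zeta i i) delta (f i)
      HmuA HmuJ Hbeta Hzeta Hdelta X HX (tau0 i) (A i) (fun s => f i (Zof n zeta A i s)) (tau i));
    auto.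
  - intros x. apply continuity_pt_filterlim. eapply solution_continuous; eauto.
  - eapply solution_ge0; eauto.
  - eapply solution_delay_law; eauto.
  - eapply solution_rate_le; eauto.
  - eapply solution_delta_le; eauto.
  - eapply solution_is_derive; eauto.
Qed.

Lemma solutions_eventually_bounded n alpha muA muJ beta zeta f :
  assumptionA n muA muJ beta zeta f -> forall delta, 0 < delta ->
  exists M, 0 < M /\ forall phi tau0 A tau,
    in_D n alpha zeta f delta phi tau0 -> is_solution n muA muJ beta zeta f phi tau0 A tau ->
    forall eps, 0 < eps -> exists T, forall t, T <= t -> forall i, (i < n)%nat -> A i t <= M + eps.
Proof.
  intros HA delta Hdelta.
  destruct (ex_common_bound n (fun i M => forall phi tau0 A tau,
      in_D n alpha zeta f delta phi tau0 -> is_solution n muA muJ beta zeta f phi tau0 A tau ->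
      forall eps, 0 < eps -> exists T, forall t, T <= t -> A i t <= M + eps)) as [M HM].
  { intros i x y Hxy Hx phi tau0 A tau HD Hsol eps Heps.
    destruct (Hx phi tau0 A tau HD Hsol eps Heps) as [T HT].
    exists T. intros t Ht. pose proof (HT t Ht). lra. }
  { intros i Hi. destruct (species_eventually_bounded n muA muJ beta zeta f i HA Hi delta Hdelta)
      as [M HM]. exists M. apply HM. }
  exists (Rmax M 1). split; [pose proof (Rmax_r M 1); lra |].
  intros phi tau0 A tau HD Hsol eps Heps.
  destruct (ex_common_bound n (fun i T => forall t, T <= t -> A i t <= Rmax M 1 + eps))
    as [T HT].
  - intros i x y Hxy Hx t Ht. apply Hx. lra.
  - intros i Hi. destruct (HM i Hi phi tau0 A tau HD Hsol eps Heps) as [T HT].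
    exists T. intros t Ht. pose proof (HT t Ht). pose proof (Rmax_l M 1). lra.
  - exists T. intros t Ht i Hi. apply HT; auto.
Qed.

Lemma D_positively_invariant n alpha delta muA muJ beta zeta f phi tau0 A tau :
  assumptionA n muA muJ beta zeta f -> 0 < alpha ->
  in_D n alpha zeta f delta phi tau0 -> is_solution n muA muJ beta zeta f phi tau0 A tau ->
  forall t, 0 <= t -> in_D n alpha zeta f delta (fun i theta => A i (t + theta)) (fun i => tau i t).
Proof.
  intros HA Halpha HD Hsol t Ht i Hi. split; [| split].
  - apply (shift_in_X n alpha muA muJ beta zeta f phi tau0 A tau HA Hsol i Hi t Halpha); auto.
    apply (HD i Hi).
  - apply (Hsol i Hi); auto.
  - destruct (shift_RInt n muA muJ beta zeta f phi tau0 A tau HA Hsol i Hi t Ht) as [pr Hpr].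
    exists pr. rewrite Hpr. eapply solution_delta_le; eauto.
Qed.

Theorem mainTheorem8 (n : nat) (alpha : R) (muA muJ beta : nat -> R)
  (zeta : nat -> nat -> R) (f : nat -> R -> R) :
  assumptionA n muA muJ beta zeta f -> 0 < alpha ->
  (forall delta, 0 <= delta ->
     forall (phi : nat -> R -> R) (tau0 : nat -> R) (A tau : nat -> R -> R),
       in_D n alpha zeta f delta phi tau0 ->
       is_solution n muA muJ beta zeta f phi tau0 A tau ->
       forall t, 0 <= t ->
         in_D n alpha zeta f delta (fun i theta => A i (t + theta)) (fun i => tau i t))
  /\
  (forall delta, 0 < delta ->
     exists M, 0 < M /\
       forall (phi : nat -> R -> R) (tau0 : nat -> R) (A tau : nat -> R -> R),
         in_D n alpha zeta f delta phi tau0 ->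
         (forall i, (i < n)%nat -> forall theta, theta <= 0 -> 0 <= phi i theta) ->
         (forall i, (i < n)%nat -> 0 < tau0 i) ->
         is_solution n muA muJ beta zeta f phi tau0 A tau ->
         (* limsup_{t -> +oo} max_i A_i(t) <= M *)
         forall eps, 0 < eps -> exists T, forall t, T <= t ->
           forall i, (i < n)%nat -> A i t <= M + eps).
Proof.
  intros HA Halpha. split.
  - intros delta _ phi tau0 A tau HD Hsol.
    exact (D_positively_invariant n alpha delta muA muJ beta zeta f phi tau0 A tau HA Halpha HD Hsol).
  - intros delta Hdelta.
    destruct (solutions_eventually_bounded n alpha muA muJ beta zeta f HA delta Hdelta)
      as [M [HM Hbound]].
    exists M. split; [exact HM |].
    (* nonnegativity of the solution is part of [is_solution] *)
    intros phi tau0 A tau HD _ _ Hsol. exact (Hbound phi tau0 A tau HD Hsol).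
Qed.
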